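(* Let $A,B,C$ be real constants and, for a metric $g$ on an $n$-dimensional spacetime, set $$F = A\,R^{\alpha\beta\gamma\delta}R_{\alpha\beta\gamma\delta}+B\,R^{\alpha\beta}R_{\alpha\beta}+C\,R^{2},\qquad H^{\mu\nu}=\frac{1}{n-4}\,\frac{1}{\sqrt{|g|}}\,\frac{\delta}{\delta g_{\mu\nu}}\int F\sqrt{|g|}\,d^{n}x .$$ Suppose that, for every static spherically symmetric (SSS) metric $$ds^{2}=e^{\nu(r)}dt^{2}-e^{\lambda(r)}dr^{2}-r^{2}\,d\Omega^{2}_{n-2},$$ the quantity $H^{\mu\nu}$ has a finite limit as $n\to 4$. Then $(A,B,C)$ is proportional to the Gauss–Bonnet combination $(1,-4,1)$, i.e. $B=-4C$ and $A=C$; equivalently, $F$ is a multiple of $GB=R^{\alpha\beta\gamma\delta}R_{\alpha\beta\gamma\delta}-4R^{\alpha\beta}R_{\alpha\beta}+R^{2}$.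
   Context: This arises in the dimensional-regularization treatment of one-loop quantum corrections to gravity: the quantum correction term is $H^{\mu\nu}$ as defined, with $n$ regarded as a continuous dimension parameter near $4$. Writing $F\sqrt{|g|}$ evaluated on the SSS metric as $f_0+(n-4)f_1+O((n-4)^2)$, finiteness as $n\to4$ means the variational derivative (Euler–Lagrange expression with respect to $\nu$ and $\lambda$, total derivatives discarded) of the $O((n-4)^0)$ part vanishes. In the SSS metric, $\nu$ and $\lambda$ are arbitrary smooth functions of the radial coordinate $r$ and $d\Omega^2_{n-2}$ is the line element of the unit $(n-2)$-sphere; signature $(+,-,\dots,-)$. *)

From Stdlib Require Import Reals.
From Coquelicot Require Import Coquelicot.
Open Scope R_scope.

(** Points of 4-dimensional coordinate space, coordinates indexed by
    0 = t, 1 = r, 2 = theta, 3 = phi (indices >= 4 are never used). *)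
Definition Pt := nat -> R.

Definition pt (t r th ph : R) : Pt :=
  fun i => match i with 0%nat => t | 1%nat => r | 2%nat => th | _ => ph end.

Definition upd (x : Pt) (a : nat) (s : R) : Pt :=
  fun i => if Nat.eqb i a then s else x i.

Definition pd (a : nat) (f : Pt -> R) (x : Pt) : R :=
  Derive (fun s => f (upd x a s)) (x a).

Definition sum4 (f : nat -> R) : R := f 0%nat + f 1%nat + f 2%nat + f 3%nat.

(** A metric is given by its components g_{ab}(x); [gi] is the inverse metric
    g^{ab}(x). *)
Definition tensor2 := nat -> nat -> Pt -> R.

Definition Gam (g gi : tensor2) (a b c : nat) (x : Pt) : R :=
  / 2 * sum4 (fun d => gi a d x *
     (pd b (g d c) x + pd c (g d b) x - pd d (g b c) x)).

(** Riemann tensor R^a_{bcd}.  (Quadratic invariants below do not depend on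
    the overall sign conventions.) *)
Definition Riem (g gi : tensor2) (a b c d : nat) (x : Pt) : R :=
  pd c (Gam g gi a d b) x - pd d (Gam g gi a c b) x
  + sum4 (fun e => Gam g gi a c e x * Gam g gi e d b x
                   - Gam g gi a d e x * Gam g gi e c b x).

Definition Ric (g gi : tensor2) (b d : nat) (x : Pt) : R :=
  sum4 (fun a => Riem g gi a b a d x).

Definition Rscal (g gi : tensor2) (x : Pt) : R :=
  sum4 (fun b => sum4 (fun d => gi b d x * Ric g gi b d x)).

Definition Kret (g gi : tensor2) (x : Pt) : R :=
  sum4 (fun a => sum4 (fun b => sum4 (fun c => sum4 (fun d =>
    sum4 (fun e => g a e x * Riem g gi e b c d x) *
    sum4 (fun b' => sum4 (fun c' => sum4 (fun d' =>
      gi b b' x * gi c c' x * gi d d' x * Riem g gi a b' c' d' x))))))).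

Definition Ric2 (g gi : tensor2) (x : Pt) : R :=
  sum4 (fun a => sum4 (fun b => sum4 (fun c => sum4 (fun d =>
    gi a c x * gi b d x * Ric g gi a b x * Ric g gi c d x)))).

Definition diagm (dg : nat -> Pt -> R) : tensor2 :=
  fun a b x => if Nat.eqb a b then dg a x else 0.
Definition diagm_inv (dg : nat -> Pt -> R) : tensor2 :=
  fun a b x => if Nat.eqb a b then / dg a x else 0.
Definition diag_sqrtdet (dg : nat -> Pt -> R) (x : Pt) : R :=
  sqrt (Rabs (dg 0%nat x * dg 1%nat x * dg 2%nat x * dg 3%nat x)).

(** The static spherically symmetric metric at n = 4, signature (+,-,-,-):
    ds^2 = e^{nu(r)} dt^2 - e^{lambda(r)} dr^2 - r^2 (dtheta^2 + sin^2 theta dphi^2). *)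
Definition sss (nu la : R -> R) (a : nat) (x : Pt) : R :=
  match a with
  | 0%nat => exp (nu (x 1%nat))
  | 1%nat => - exp (la (x 1%nat))
  | 2%nat => - (x 1%nat) ^ 2
  | _ => - (x 1%nat) ^ 2 * (sin (x 2%nat)) ^ 2
  end.

(** f0 : the O((n-4)^0) part of F sqrt|g| on the SSS metric, i.e. its value
    at n = 4, with F = A Riem^2 + B Ric^2 + C R^2. *)
Definition f0 (A B C : R) (nu la : R -> R) (x : Pt) : R :=
  let g := diagm (sss nu la) in
  let gi := diagm_inv (sss nu la) in
  (A * Kret g gi x + B * Ric2 g gi x + C * (Rscal g gi x) ^ 2)
  * diag_sqrtdet (sss nu la) x.

(** Reduced action (per unit time) of f0 over the shell a <= r <= b. *)
Definition S0 (A B C : R) (nu la : R -> R) (a b : R) : R :=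
  RInt (fun r => RInt (fun th => RInt (fun ph =>
    f0 A B C nu la (pt 0 r th ph)) 0 (2 * PI)) 0 PI) a b.

Definition smooth (f : R -> R) : Prop := forall (k : nat) (x : R), ex_derive_n f k x.

Definition supported_in (eta : R -> R) (a b : R) : Prop :=
  exists a' b', a < a' /\ a' < b' /\ b' < b /\
    forall r, (r < a' \/ b' < r) -> eta r = 0.

(** Finiteness of H^{mu nu} as n -> 4 on all SSS metrics: the variational
    derivative of the O((n-4)^0) part f0 with respect to nu and to lambda
    vanishes, i.e. the first variation of the action of f0 vanishes for all
    compactly supported smooth variations (total derivatives thus discarded). *)
Definition H_finite_at_4 (A B C : R) : Prop :=
  forall nu la : R -> R, smooth nu -> smooth la ->
  forall (a b : R) (eta : R -> R), 0 < a -> a < b -> smooth eta ->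
  supported_in eta a b ->
  Derive (fun eps => S0 A B C (fun r => nu r + eps * eta r) la a b) 0 = 0 /\
  Derive (fun eps => S0 A B C nu (fun r => la r + eps * eta r) a b) 0 = 0.

From Stdlib Require Import Reals Lra Lia FunctionalExtensionality.
From Coquelicot Require Import Coquelicot.
Open Scope R_scope.

(* Restrict to SSS metrics with constant [lambda = c] and vary [nu] around
   [nu = 0].  On such metrics every curvature component is a multiple of the
   curvature of one coordinate plane, so [f0] reduces to [L(r, nu, nu', nu'') sin th].
   The linearization of [L] in [nu] is [p0 nu / r^2 + p1 nu' / r + p2 nu''], and
   after integrating by parts the Euler-Lagrange expression is [(p0 + p1) / r^2]
   with [p0 + p1] a nonzero multiple of [(2A + B + 2C)(1 - e^c) + 2(B + 4C)].
   Its vanishing for two values [e^c <> 1] forces [B + 4C = 0 = 2A + B + 2C].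
   The test variation is the smooth bump [exp (-1 / ((r - 2)(3 - r)))]. *)

Ltac solve_neq0 := match goal with
  | |- _ * _ <> 0 => apply Rmult_integral_contrapositive_currified; solve_neq0
  | |- - _ <> 0 => apply Ropp_neq_0_compat; solve_neq0
  | |- _ ^ _ <> 0 => apply pow_nonzero; solve_neq0
  | |- exp _ <> 0 => apply Rgt_not_eq, exp_pos
  | |- / _ <> 0 => apply Rinv_neq_0_compat; solve_neq0
  | |- _ => first [assumption | lra]
  end.

Ltac is_atomic_fun f :=
  first [ is_var f | lazymatch f with Derive _ => idtac end
        | lazymatch f with (fun x => ?h x) =>
            first [is_var h | lazymatch h with Derive _ => idtac end] end ].

Ltac compute_Derive := match goal with
  | |- context [Derive (fun _ : R => ?k) ?p] => rewrite (Derive_const k p)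
  | |- context [Derive ?f ?p] =>
     tryif is_atomic_fun f then fail else
     let H := fresh in
     eassert (H : is_derive f p _)
       by (auto_derive; [repeat split; try solve_neq0; auto | reflexivity]);
     rewrite (is_derive_unique _ _ _ H); clear H
  end.

Lemma sum4_ext (f g : nat -> R) :
  (forall i, (i < 4)%nat -> f i = g i) -> sum4 f = sum4 g.
Proof. intros H; unfold sum4; rewrite !H by lia; reflexivity. Qed.

Section DiagonalMetric.
Variables (G : nat -> Pt -> R) (x : Pt).
Local Notation g := (diagm G).
Local Notation gi := (diagm_inv G).

Lemma sum4_diagm (F : nat -> R) a :
  (a < 4)%nat -> sum4 (fun e => g a e x * F e) = G a x * F a.
Proof. intros; unfold diagm, sum4; destruct a as [|[|[|[|a]]]]; try lia; simpl; ring. Qed.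

Lemma sum4_diagm_inv3 (F : nat -> nat -> nat -> R) b c d :
  (b < 4)%nat -> (c < 4)%nat -> (d < 4)%nat ->
  sum4 (fun b' => sum4 (fun c' => sum4 (fun d' =>
    gi b b' x * gi c c' x * gi d d' x * F b' c' d')))
  = / G b x * / G c x * / G d x * F b c d.
Proof.
  intros; unfold diagm_inv, sum4;
  destruct b as [|[|[|[|b]]]]; try lia; destruct c as [|[|[|[|c]]]]; try lia;
  destruct d as [|[|[|[|d]]]]; try lia; simpl; ring.
Qed.

Lemma Kret_diagm : Kret g gi x =
  sum4 (fun a => sum4 (fun b => sum4 (fun c => sum4 (fun d =>
    G a x * Riem g gi a b c d x * (/ G b x * / G c x * / G d x * Riem g gi a b c d x))))).
Proof.
  unfold Kret. apply sum4_ext; intros a Ha; apply sum4_ext; intros b Hb;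
  apply sum4_ext; intros c Hc; apply sum4_ext; intros d Hd.
  rewrite (sum4_diagm (fun e => Riem g gi e b c d x)) by exact Ha.
  rewrite (sum4_diagm_inv3 (fun b' c' d' => Riem g gi a b' c' d' x)) by assumption.
  reflexivity.
Qed.

Lemma Ric2_diagm : Ric2 g gi x =
  sum4 (fun a => sum4 (fun b => / G a x * / G b x * Ric g gi a b x * Ric g gi a b x)).
Proof.
  unfold Ric2. apply sum4_ext; intros a Ha; apply sum4_ext; intros b Hb.
  unfold diagm_inv, sum4;
  destruct a as [|[|[|[|a]]]]; try lia; destruct b as [|[|[|[|b]]]]; try lia; simpl; ring.
Qed.

Lemma Rscal_diagm : Rscal g gi x = sum4 (fun b => / G b x * Ric g gi b b x).
Proof.
  unfold Rscal. apply sum4_ext; intros b Hb.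
  unfold diagm_inv, sum4; destruct b as [|[|[|[|b]]]]; try lia; simpl; ring.
Qed.

End DiagonalMetric.

(* Curvature of the coordinate (a,b)-plane of the SSS metric with [lambda = c],
   in terms of [n1 = nu'] and [n2 = nu'']; the (r,theta)- and (r,phi)-planes are flat. *)
Definition sect_jet (c n1 n2 : R) (a b : nat) (r : R) : R :=
  match a, b with
  | 0%nat, 1%nat | 1%nat, 0%nat => (n2 / 2 + n1 ^ 2 / 4) / exp c
  | 0%nat, 2%nat | 2%nat, 0%nat | 0%nat, 3%nat | 3%nat, 0%nat => n1 / (2 * r * exp c)
  | 2%nat, 3%nat | 3%nat, 2%nat => (/ exp c - 1) / r ^ 2
  | _, _ => 0 end.

Definition kret_sect (k01 k02 k23 : R) : R := 4 * (k01 ^ 2 + 2 * k02 ^ 2 + k23 ^ 2).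
Definition ric2_sect (k01 k02 k23 : R) : R :=
  (k01 + 2 * k02) ^ 2 + k01 ^ 2 + 2 * (k02 + k23) ^ 2.
Definition rscal_sect (k01 k02 k23 : R) : R := 2 * (k01 + 2 * k02 + k23).

Section SSSConstantLambda.
Variables (nu : R -> R) (c : R).
Hypothesis nu_derivable : forall r, ex_derive nu r.
Hypothesis nu_derivable2 : forall r, ex_derive (Derive nu) r.

Local Notation g := (diagm (sss nu (fun _ => c))).
Local Notation gi := (diagm_inv (sss nu (fun _ => c))).

Definition sss_rth (d : nat) (r th : R) : R :=
  match d with 0%nat => exp (nu r) | 1%nat => - exp c | 2%nat => - r ^ 2
  | _ => - r ^ 2 * sin th ^ 2 end.

Definition sss_rth_pd (b d : nat) (r th : R) : R :=
  match b, d with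
  | 1%nat, 0%nat => Derive nu r * exp (nu r)
  | 1%nat, 1%nat => 0
  | 1%nat, 2%nat => - (2 * r)
  | 1%nat, _ => - (2 * r) * sin th ^ 2
  | 2%nat, (0 | 1 | 2)%nat => 0
  | 2%nat, _ => - r ^ 2 * (2 * sin th * cos th)
  | _, _ => 0 end.

Lemma sss_eq_rth d y : sss nu (fun _ => c) d y = sss_rth d (y 1%nat) (y 2%nat).
Proof. destruct d as [|[|[|d]]]; reflexivity. Qed.

Lemma pd_sss b d e y :
  pd b (g d e) y = if Nat.eqb d e then sss_rth_pd b d (y 1%nat) (y 2%nat) else 0.
Proof.
  unfold pd, diagm, sss_rth_pd.
  destruct (Nat.eqb d e); [|apply Derive_const].
  destruct b as [|[|[|b]]]; unfold upd; simpl;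
  destruct d as [|[|[|d]]]; simpl; try apply Derive_const.
  all: apply is_derive_unique; auto_derive; [auto | try ring].
  change (fun x : R => nu x) with nu; ring.
Qed.

Definition christoffel_rth (a b e : nat) (r th : R) : R :=
  / 2 * / sss_rth a r th *
  ((if Nat.eqb a e then sss_rth_pd b a r th else 0)
   + (if Nat.eqb a b then sss_rth_pd e a r th else 0)
   - (if Nat.eqb b e then sss_rth_pd a b r th else 0)).

Lemma Gam_sss a b e y : (a < 4)%nat ->
  Gam g gi a b e y = christoffel_rth a b e (y 1%nat) (y 2%nat).
Proof.
  intros Ha. unfold Gam, christoffel_rth, sum4. rewrite !pd_sss.
  unfold diagm_inv. rewrite !sss_eq_rth.
  destruct a as [|[|[|[|a]]]]; try lia; simpl; ring.
Qed.

Lemma pd_Gam_sss a b e k y : (a < 4)%nat ->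
  pd k (Gam g gi a b e) y =
  match k with
  | 1%nat => Derive (fun s => christoffel_rth a b e s (y 2%nat)) (y 1%nat)
  | 2%nat => Derive (fun s => christoffel_rth a b e (y 1%nat) s) (y 2%nat)
  | _ => 0 end.
Proof.
  intros Ha.
  replace (Gam g gi a b e) with (fun z => christoffel_rth a b e (z 1%nat) (z 2%nat))
    by (apply functional_extensionality; intros z; rewrite Gam_sss; auto).
  unfold pd, upd. destruct k as [|[|[|k]]]; simpl; try reflexivity; apply Derive_const.
Qed.

Definition sect (a b : nat) (r : R) : R :=
  sect_jet c (Derive nu r) (Derive (Derive nu) r) a b r.

Definition riem_rth (a b e d : nat) (r th : R) : R :=
  if Nat.eqb a b then 0
  else if (Nat.eqb a e && Nat.eqb b d)%bool then sect a b r * sss_rth b r th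
  else if (Nat.eqb a d && Nat.eqb b e)%bool then - (sect a b r * sss_rth b r th)
  else 0.

Lemma Riem_sss y a b e d :
  y 1%nat <> 0 -> sin (y 2%nat) <> 0 ->
  (a < 4)%nat -> (b < 4)%nat -> (e < 4)%nat -> (d < 4)%nat ->
  Riem g gi a b e d y = riem_rth a b e d (y 1%nat) (y 2%nat).
Proof.
  intros Hr Hs Ha Hb He Hd.
  unfold Riem. rewrite !pd_Gam_sss by lia. unfold sum4. rewrite !Gam_sss by lia.
  set (r := y 1%nat) in *. set (th := y 2%nat) in *.
  destruct a as [|[|[|[|a]]]]; try lia; destruct b as [|[|[|[|b]]]]; try lia;
  destruct e as [|[|[|[|e]]]]; try lia; destruct d as [|[|[|[|d]]]]; try lia;
  unfold riem_rth, sect, sect_jet, christoffel_rth, sss_rth_pd, sss_rth; simpl;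
  repeat compute_Derive;
  change (fun x : R => nu x) with nu in *;
  change (fun x : R => Derive nu x) with (Derive nu) in *;
  field; repeat split; solve_neq0.
Qed.

Section Invariants.
Variable y : Pt.
Hypothesis r_neq0 : y 1%nat <> 0.
Hypothesis sin_neq0 : sin (y 2%nat) <> 0.
Local Notation k a b := (sect a b (y 1%nat)).

Ltac expand_riem :=
  unfold sum4, riem_rth; simpl;
  unfold sect, sect_jet, sss_rth, kret_sect, ric2_sect, rscal_sect;
  field; repeat split; solve_neq0.

Lemma Kret_sss : Kret g gi y = kret_sect (k 0 1) (k 0 2) (k 2 3).
Proof.
  rewrite Kret_diagm.
  erewrite sum4_ext; [| intros a Ha; apply sum4_ext; intros b Hb;
    apply sum4_ext; intros e He; apply sum4_ext; intros d Hd;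
    rewrite Riem_sss by auto; reflexivity].
  expand_riem.
Qed.

Lemma Ric2_sss : Ric2 g gi y = ric2_sect (k 0 1) (k 0 2) (k 2 3).
Proof.
  rewrite Ric2_diagm.
  erewrite sum4_ext; [| intros a Ha; apply sum4_ext; intros b Hb; unfold Ric;
    erewrite sum4_ext; [| intros e He; rewrite Riem_sss by auto; reflexivity];
    reflexivity].
  expand_riem.
Qed.

Lemma Rscal_sss : Rscal g gi y = rscal_sect (k 0 1) (k 0 2) (k 2 3).
Proof.
  rewrite Rscal_diagm.
  erewrite sum4_ext; [| intros a Ha; unfold Ric;
    erewrite sum4_ext; [| intros e He; rewrite Riem_sss by auto; reflexivity];
    reflexivity].
  expand_riem.
Qed.

End Invariants.

End SSSConstantLambda.

Definition lagr_sect (A B C k01 k02 k23 : R) : R :=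
  A * kret_sect k01 k02 k23 + B * ric2_sect k01 k02 k23 + C * rscal_sect k01 k02 k23 ^ 2.

Definition lagr_jet (A B C c n0 n1 n2 r : R) : R :=
  lagr_sect A B C (sect_jet c n1 n2 0 1 r) (sect_jet c n1 n2 0 2 r) (sect_jet c n1 n2 2 3 r)
  * (exp (n0 / 2) * exp (c / 2) * r ^ 2).

Lemma diag_sqrtdet_sss (nu : R -> R) c (x : Pt) : 0 < sin (x 2%nat) ->
  diag_sqrtdet (sss nu (fun _ => c)) x
  = exp (nu (x 1%nat) / 2) * exp (c / 2) * x 1%nat ^ 2 * sin (x 2%nat).
Proof.
  intros Hs. unfold diag_sqrtdet, sss.
  set (r := x 1%nat). set (th := x 2%nat) in *.
  replace (exp (nu r) * - exp c * - r ^ 2 * (- r ^ 2 * sin th ^ 2))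
    with (- Rsqr (exp (nu r / 2) * exp (c / 2) * r ^ 2 * sin th)).
  - rewrite Rabs_Ropp, Rabs_pos_eq by apply Rle_0_sqr.
    rewrite sqrt_Rsqr; [reflexivity|].
    pose proof (exp_pos (nu r / 2)); pose proof (exp_pos (c / 2)); pose proof (pow2_ge_0 r).
    apply Rmult_le_pos; [|lra]. apply Rmult_le_pos; [|lra]. nra.
  - unfold Rsqr.
    replace (exp (nu r)) with (exp (nu r / 2) * exp (nu r / 2))
      by (rewrite <- exp_plus; f_equal; field).
    replace (exp c) with (exp (c / 2) * exp (c / 2))
      by (rewrite <- exp_plus; f_equal; field).
    ring.
Qed.

Lemma f0_sss A B C (nu : R -> R) c (x : Pt) :
  (forall r, ex_derive nu r) -> (forall r, ex_derive (Derive nu) r) ->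
  x 1%nat <> 0 -> 0 < sin (x 2%nat) ->
  f0 A B C nu (fun _ => c) x
  = lagr_jet A B C c (nu (x 1%nat)) (Derive nu (x 1%nat)) (Derive (Derive nu) (x 1%nat)) (x 1%nat)
    * sin (x 2%nat).
Proof.
  intros H1 H2 Hr Hs. unfold f0; cbv zeta.
  rewrite Kret_sss, Ric2_sss, Rscal_sss, diag_sqrtdet_sss by (auto; lra).
  unfold lagr_jet, lagr_sect, sect. ring.
Qed.

Lemma RInt_sin_0_PI : RInt sin 0 PI = 2.
Proof.
  apply is_RInt_unique.
  replace 2 with (minus ((fun x => - cos x) PI) ((fun x => - cos x) 0))
    by (simpl; rewrite cos_PI, cos_0; unfold minus, plus, opp; simpl; ring).
  apply (is_RInt_derive (fun x => - cos x) sin).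
  - intros x _. auto_derive; auto. ring.
  - intros x _. apply continuity_pt_filterlim, continuity_sin.
Qed.

Lemma ex_RInt_derivable (f : R -> R) a b : a <= b ->
  (forall z, a <= z <= b -> ex_derive f z) -> ex_RInt f a b.
Proof.
  intros Hab Hf. apply (ex_RInt_continuous (V := R_CompleteNormedModule)).
  intros z Hz. rewrite Rmin_left, Rmax_right in Hz by lra.
  apply (@ex_derive_continuous R_AbsRing R_NormedModule), Hf, Hz.
Qed.

Lemma RInt_mult_l (f : R -> R) a b k :
  ex_RInt f a b -> RInt (fun x => k * f x) a b = k * RInt f a b.
Proof. exact (RInt_scal f a b k). Qed.

Lemma S0_sss A B C (nu : R -> R) c a b :
  (forall r, ex_derive nu r) -> (forall r, ex_derive (Derive nu) r) ->
  (forall r, ex_derive (Derive (Derive nu)) r) -> 0 < a -> a <= b ->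
  S0 A B C nu (fun _ => c) a b
  = 4 * PI * RInt (fun r => lagr_jet A B C c (nu r) (Derive nu r) (Derive (Derive nu) r) r) a b.
Proof.
  intros H1 H2 H3 Ha Hab. pose proof PI_RGT_0. unfold S0.
  rewrite <- RInt_mult_l.
  2: { apply ex_RInt_derivable; [lra|]. intros z Hz. assert (z <> 0) by lra.
       unfold lagr_jet, lagr_sect, kret_sect, ric2_sect, rscal_sect, sect_jet.
       auto_derive. repeat split; auto; solve_neq0. }
  apply RInt_ext. intros r Hr. rewrite Rmin_left, Rmax_right in Hr by lra.
  set (L := lagr_jet _ _ _ _ _ _ _ r).
  transitivity (RInt (fun th => (2 * PI * L) * sin th) 0 PI).
  - apply RInt_ext. intros th Hth. rewrite Rmin_left, Rmax_right in Hth by lra.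
    assert (Hs : 0 < sin th) by (apply sin_gt_0; lra).
    rewrite (RInt_ext _ (fun _ => L * sin th)).
    + rewrite RInt_const. unfold scal; simpl; unfold mult; simpl. ring.
    + intros ph _. rewrite f0_sss; simpl; auto; lra.
  - rewrite RInt_mult_l, RInt_sin_0_PI.
    + simpl; ring.
    + apply ex_RInt_derivable; [lra|]. intros; auto_derive; auto.
Qed.

Definition lin_coef0 (A B C c : R) : R := exp (c / 2) * (2 * A + B + 2 * C) * (/ exp c - 1) ^ 2.
Definition lin_coef1 (A B C c : R) : R := exp (c / 2) * (/ exp c - 1) * (2 * B + 8 * C) / exp c.
Definition lin_coef2 (A B C c : R) : R := 4 * exp (c / 2) * C * (/ exp c - 1) / exp c.

Definition lin_lagr (A B C c e0 e1 e2 r : R) : R :=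
  lin_coef0 A B C c * e0 / r ^ 2 + lin_coef1 A B C c * e1 / r + lin_coef2 A B C c * e2.

Lemma lagr_jet_linearization A B C c e0 e1 e2 r : r <> 0 ->
  is_derive (fun eps => lagr_jet A B C c (eps * e0) (eps * e1) (eps * e2) r) 0
    (lin_lagr A B C c e0 e1 e2 r).
Proof.
  intros Hr.
  unfold lagr_jet, lagr_sect, kret_sect, ric2_sect, rscal_sect, sect_jet,
    lin_lagr, lin_coef0, lin_coef1, lin_coef2.
  auto_derive; [repeat split; solve_neq0|].
  replace (exp (0 * e0 * / 2)) with 1 by (rewrite <- exp_0; f_equal; ring).
  field; repeat split; solve_neq0.
Qed.

Lemma continuity_2d_pt_pow (f : R -> R -> R) x y n :
  continuity_2d_pt f x y -> continuity_2d_pt (fun u v => f u v ^ n) x y.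
Proof.
  intros H. induction n as [|n IH]; simpl.
  - apply continuity_2d_pt_const.
  - apply (continuity_2d_pt_mult f (fun u v => f u v ^ n)); auto.
Qed.

Lemma continuity_2d_pt_div (f g : R -> R -> R) x y :
  continuity_2d_pt f x y -> continuity_2d_pt g x y -> g x y <> 0 ->
  continuity_2d_pt (fun u v => f u v / g u v) x y.
Proof.
  intros Hf Hg Hn. apply (continuity_2d_pt_mult f (fun u v => / g u v)); auto.
  apply continuity_2d_pt_inv; auto.
Qed.

Ltac continuity_2d :=
  lazymatch goal with
  | |- continuity_2d_pt (fun _ _ => ?k) _ _ => apply continuity_2d_pt_const
  | |- continuity_2d_pt (fun u _ => u) _ _ => apply continuity_2d_pt_id1
  | |- continuity_2d_pt (fun _ v => v) _ _ => apply continuity_2d_pt_id2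
  | |- continuity_2d_pt (fun u v => @?f u v + @?g u v) _ _ =>
      apply (continuity_2d_pt_plus f g); continuity_2d
  | |- continuity_2d_pt (fun u v => @?f u v - @?g u v) _ _ =>
      apply (continuity_2d_pt_minus f g); continuity_2d
  | |- continuity_2d_pt (fun u v => @?f u v * @?g u v) _ _ =>
      apply (continuity_2d_pt_mult f g); continuity_2d
  | |- continuity_2d_pt (fun u v => @?f u v / @?g u v) _ _ =>
      apply (continuity_2d_pt_div f g); [continuity_2d | continuity_2d | cbv beta; solve_neq0]
  | |- continuity_2d_pt (fun u v => - @?f u v) _ _ =>
      apply (continuity_2d_pt_opp f); continuity_2d
  | |- continuity_2d_pt (fun u v => / @?f u v) _ _ =>
      apply (continuity_2d_pt_inv f); [continuity_2d | cbv beta; solve_neq0]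
  | |- continuity_2d_pt (fun u v => @?f u v ^ ?n) _ _ =>
      apply (continuity_2d_pt_pow f _ _ n); continuity_2d
  | |- continuity_2d_pt (fun u v => ?h (@?g u v)) _ _ =>
      apply (continuity_1d_2d_pt_comp h g);
      [apply continuity_pt_filterlim, (@ex_derive_continuous R_AbsRing R_NormedModule);
       first [auto_derive; auto | auto] | continuity_2d]
  end.

Section Perturbation.
Variables (A B C c a b : R) (eta : R -> R).
Hypothesis a_pos : 0 < a.
Hypothesis a_le_b : a <= b.
Hypothesis eta_derivable : forall r, ex_derive eta r.
Hypothesis eta_derivable2 : forall r, ex_derive (Derive eta) r.
Hypothesis eta_derivable3 : forall r, ex_derive (Derive (Derive eta)) r.

Definition lagr_pert (eps r : R) : R :=
  lagr_jet A B C c (eps * eta r) (eps * Derive eta r) (eps * Derive (Derive eta) r) r.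

Lemma S0_pert eps :
  S0 A B C (fun r => 0 + eps * eta r) (fun _ => c) a b = 4 * PI * RInt (lagr_pert eps) a b.
Proof.
  assert (D1 : Derive (fun r => 0 + eps * eta r) = fun r => eps * Derive eta r).
  { apply functional_extensionality; intros r. apply is_derive_unique.
    auto_derive; auto. change (fun x : R => eta x) with eta. ring. }
  assert (D2 : Derive (fun r => eps * Derive eta r) = fun r => eps * Derive (Derive eta) r).
  { apply functional_extensionality; intros r. apply is_derive_unique.
    auto_derive; auto. change (fun x : R => Derive eta x) with (Derive eta). ring. }
  rewrite S0_sss by (rewrite ?D1, ?D2; auto; intros; auto_derive; auto).
  rewrite D1, D2. f_equal. apply RInt_ext. intros r _. unfold lagr_pert. f_equal. ring.
Qed.

Lemma RInt_lagr_pert_derive :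
  is_derive (fun eps => RInt (lagr_pert eps) a b) 0
    (RInt (fun r => lin_lagr A B C c (eta r) (Derive eta r) (Derive (Derive eta) r) r) a b).
Proof.
  evar (D : R -> R -> R).
  assert (HD : forall u v, is_derive (fun z => lagr_pert z v) u (D u v)).
  { intros u v. unfold lagr_pert, lagr_jet, lagr_sect, kret_sect, ric2_sect, rscal_sect,
      sect_jet.
    auto_derive; [exact I|]. subst D. reflexivity. }
  subst D.
  erewrite RInt_ext.
  apply (is_derive_RInt_param lagr_pert).
  - apply filter_forall. intros x t Ht. eexists. apply HD.
  - intros t Ht. rewrite Rmin_left, Rmax_right in Ht by lra. assert (t <> 0) by lra.
    eapply continuity_2d_pt_ext.
    + intros u v. symmetry. apply is_derive_unique, HD.
    + continuity_2d.
  - apply filter_forall. intros eps. apply ex_RInt_derivable; [lra|].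
    intros z Hz. assert (z <> 0) by lra.
    unfold lagr_pert, lagr_jet, lagr_sect, kret_sect, ric2_sect, rscal_sect, sect_jet.
    auto_derive. repeat split; auto; solve_neq0.
  - intros t Ht. rewrite Rmin_left, Rmax_right in Ht by lra.
    symmetry. apply is_derive_unique, lagr_jet_linearization. lra.
Qed.

End Perturbation.

Lemma supported_in_locally_zero (eta : R -> R) a b r :
  supported_in eta a b -> r <= a \/ b <= r -> locally r (fun z => eta z = 0).
Proof.
  intros [a' [b' [Ha [Hab [Hb Hz]]]]] Hr.
  assert (Hball : forall (d : posreal) z, ball r d z -> r - d < z < r + d).
  { intros d z Hzr. unfold ball in Hzr; simpl in Hzr;
    unfold AbsRing_ball, abs, minus, plus, opp in Hzr; simpl in Hzr.
    apply Rabs_def2 in Hzr. lra. }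
  destruct Hr as [Hr | Hr].
  - assert (Hd : 0 < a' - r) by lra.
    exists (mkposreal _ Hd). intros z Hzr%Hball. apply Hz. left. simpl in Hzr. lra.
  - assert (Hd : 0 < r - b') by lra.
    exists (mkposreal _ Hd). intros z Hzr%Hball. apply Hz. right. simpl in Hzr. lra.
Qed.

Lemma supported_in_boundary (eta : R -> R) a b r :
  supported_in eta a b -> r <= a \/ b <= r -> eta r = 0 /\ Derive eta r = 0.
Proof.
  intros Hs Hr. pose proof (supported_in_locally_zero eta a b r Hs Hr) as Hloc.
  split.
  - exact (locally_singleton _ _ Hloc).
  - rewrite (Derive_ext_loc eta (fun _ => 0)) by exact Hloc. apply Derive_const.
Qed.

(* [eta' / r - eta / r^2 = (eta / r)'] and [eta'' = (eta')'] integrate to zero. *)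
Lemma RInt_by_parts (eta : R -> R) a b p0 p1 p2 : 0 < a <= b ->
  (forall r, ex_derive eta r) -> (forall r, ex_derive (Derive eta) r) ->
  (forall r, ex_derive (Derive (Derive eta)) r) ->
  eta a = 0 -> eta b = 0 -> Derive eta a = 0 -> Derive eta b = 0 ->
  RInt (fun r => p0 * eta r / r ^ 2 + p1 * Derive eta r / r + p2 * Derive (Derive eta) r) a b
  = (p0 + p1) * RInt (fun r => eta r / r ^ 2) a b.
Proof.
  intros Hab E1 E2 E3 Ea Eb Da Db.
  assert (HI : ex_RInt (fun r => eta r / r ^ 2) a b).
  { apply ex_RInt_derivable; [lra|]. intros z Hz. assert (z <> 0) by lra.
    auto_derive. repeat split; auto; solve_neq0. }
  destruct HI as [I HI]. rewrite (is_RInt_unique _ _ _ _ HI).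
  assert (H1 : is_RInt (fun r => Derive eta r / r - eta r / r ^ 2) a b 0).
  { replace 0 with (minus ((fun r => eta r / r) b) ((fun r => eta r / r) a))
      by (cbv beta; rewrite Ea, Eb; unfold minus, plus, opp; simpl; field; lra).
    apply (is_RInt_derive (fun r => eta r / r)).
    - intros x Hx. rewrite Rmin_left, Rmax_right in Hx by lra. assert (x <> 0) by lra.
      auto_derive; [repeat split; auto|]. change (fun x0 : R => eta x0) with eta. field. lra.
    - intros x Hx. rewrite Rmin_left, Rmax_right in Hx by lra. assert (x <> 0) by lra.
      apply (@ex_derive_continuous R_AbsRing R_NormedModule).
      auto_derive. repeat split; auto; solve_neq0. }
  assert (H2 : is_RInt (Derive (Derive eta)) a b 0).
  { replace 0 with (minus (Derive eta b) (Derive eta a))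
      by (rewrite Da, Db; unfold minus, plus, opp; simpl; ring).
    apply (is_RInt_derive (Derive eta)).
    - intros x _. apply Derive_correct, E2.
    - intros x _. apply (@ex_derive_continuous R_AbsRing R_NormedModule), E3. }
  apply is_RInt_unique.
  apply (is_RInt_scal _ _ _ (p0 + p1)) in HI.
  apply (is_RInt_scal _ _ _ p1) in H1.
  apply (is_RInt_scal _ _ _ p2) in H2.
  pose proof (is_RInt_plus _ _ _ _ _ _ (is_RInt_plus _ _ _ _ _ _ HI H1) H2) as HH.
  replace ((p0 + p1) * I) with (plus (plus (scal (p0 + p1) I) (scal p1 0)) (scal p2 0))
    by (unfold plus, scal; simpl; unfold mult; simpl; ring).
  eapply is_RInt_ext; [|exact HH].
  intros x Hx. rewrite Rmin_left, Rmax_right in Hx by lra.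
  unfold scal, plus; simpl; unfold mult; simpl. field. lra.
Qed.

Lemma smooth_const (k : R) : smooth (fun _ => k).
Proof.
  intros [|[|n]] x; simpl.
  - exact I.
  - apply ex_derive_const.
  - apply (ex_derive_ext (fun _ => 0)); [intros t; symmetry; apply Derive_n_const|].
    apply ex_derive_const.
Qed.

Lemma lin_coef01 A B C c :
  lin_coef0 A B C c + lin_coef1 A B C c
  = exp (c / 2) * (/ exp c - 1) / exp c
    * ((2 * A + B + 2 * C) * (1 - exp c) + 2 * (B + 4 * C)).
Proof. unfold lin_coef0, lin_coef1. field. solve_neq0. Qed.

Lemma H_finite_at_4_relation A B C c (eta : R -> R) a b :
  H_finite_at_4 A B C -> exp c <> 1 -> smooth eta -> 0 < a -> a < b ->
  supported_in eta a b -> 0 < RInt (fun r => eta r / r ^ 2) a b ->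
  (2 * A + B + 2 * C) * (1 - exp c) + 2 * (B + 4 * C) = 0.
Proof.
  intros HF Hc Hs Ha Hab Hsupp HI.
  assert (E1 : forall r, ex_derive eta r) by exact (Hs 1%nat).
  assert (E2 : forall r, ex_derive (Derive eta) r) by exact (Hs 2%nat).
  assert (E3 : forall r, ex_derive (Derive (Derive eta)) r) by exact (Hs 3%nat).
  destruct (supported_in_boundary eta a b a Hsupp ltac:(lra)) as [Ea Da].
  destruct (supported_in_boundary eta a b b Hsupp ltac:(lra)) as [Eb Db].
  destruct (HF _ _ (smooth_const 0) (smooth_const c) a b eta Ha Hab Hs Hsupp) as [Hnu _].
  cbv beta in Hnu.
  assert (Hab' : a <= b) by lra.
  rewrite (Derive_ext _ _ _ (S0_pert A B C c a b eta Ha Hab' E1 E2 E3)) in Hnu.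
  rewrite (is_derive_unique _ _ _
    (is_derive_scal _ _ _ _ (RInt_lagr_pert_derive A B C c a b eta Ha Hab' E1 E2 E3))) in Hnu.
  unfold lin_lagr in Hnu. rewrite RInt_by_parts, lin_coef01 in Hnu by (auto; lra).
  pose proof PI_RGT_0.
  assert (Hfac : exp (c / 2) * (/ exp c - 1) / exp c <> 0).
  { assert (/ exp c <> 1) by (intro H1; apply Hc; rewrite <- (Rinv_inv (exp c)), H1; lra).
    unfold Rdiv. solve_neq0. }
  apply Rmult_integral in Hnu as [Hnu | Hnu]; [lra|].
  apply Rmult_integral in Hnu as [Hnu | Hnu]; [|lra].
  apply Rmult_integral in Hnu as [Hnu | Hnu]; [contradiction | exact Hnu].
Qed.

(* Polynomials in [(r, y)]: every derivative of the bump has the form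
   [P (r, 1 / q r) * exp (- 1 / q r)] with [q = bump_quad]. *)
Inductive poly2 := PConst (a : R) | PVarR | PVarY | PAdd (p q : poly2) | PMul (p q : poly2).

Fixpoint peval (p : poly2) (r y : R) : R :=
  match p with
  | PConst a => a | PVarR => r | PVarY => y
  | PAdd p q => peval p r y + peval q r y
  | PMul p q => peval p r y * peval q r y end.

Fixpoint pderiv_r (p : poly2) : poly2 :=
  match p with
  | PConst _ | PVarY => PConst 0 | PVarR => PConst 1
  | PAdd p q => PAdd (pderiv_r p) (pderiv_r q)
  | PMul p q => PAdd (PMul (pderiv_r p) q) (PMul p (pderiv_r q)) end.

Fixpoint pderiv_y (p : poly2) : poly2 :=
  match p with
  | PConst _ | PVarR => PConst 0 | PVarY => PConst 1
  | PAdd p q => PAdd (pderiv_y p) (pderiv_y q)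
  | PMul p q => PAdd (PMul (pderiv_y p) q) (PMul p (pderiv_y q)) end.

Lemma is_derive_value (f : R -> R) (x l l' : R) :
  is_derive f x l -> @eq R l l' -> is_derive f x l'.
Proof. intros H <-; exact H. Qed.

Lemma is_derive_peval p (g : R -> R) (x dg : R) : is_derive g x dg ->
  is_derive (fun r => peval p r (g r)) x
    (peval (pderiv_r p) x (g x) + peval (pderiv_y p) x (g x) * dg).
Proof.
  intros Hg.
  assert (Hc : forall n m : R_AbsRing, mult n m = mult m n)
    by (intros; unfold mult; simpl; ring).
  induction p; simpl.
  - apply is_derive_value with 0; [exact (is_derive_const (K := R_AbsRing) (V := R_NormedModule) a x) | ring].
  - apply is_derive_value with 1; [exact (is_derive_id (K := R_AbsRing) x) | ring].
  - eapply is_derive_value; [exact Hg | ring].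
  - eapply is_derive_value; [exact (is_derive_plus (K := R_AbsRing) (V := R_NormedModule) _ _ _ _ _ IHp1 IHp2)|].
    unfold plus; simpl. ring.
  - eapply is_derive_value; [exact (is_derive_mult (K := R_AbsRing) _ _ _ _ _ IHp1 IHp2 Hc)|].
    unfold plus, mult; simpl. ring.
Qed.

Lemma peval_bound p : exists M N, 0 < M /\
  forall r y, 1 <= r <= 4 -> 0 <= y -> Rabs (peval p r y) <= M * (1 + y) ^ N.
Proof.
  induction p as [a| | |p1 [M1 [N1 [HM1 H1]]] p2 [M2 [N2 [HM2 H2]]]
                       |p1 [M1 [N1 [HM1 H1]]] p2 [M2 [N2 [HM2 H2]]]].
  - exists (Rabs a + 1), 0%nat. split; [pose proof (Rabs_pos a); lra|].
    intros r y _ _. simpl. lra.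
  - exists 4, 0%nat. split; [lra|]. intros r y Hr _. simpl. rewrite Rabs_pos_eq; lra.
  - exists 1, 1%nat. split; [lra|]. intros r y _ Hy. simpl. rewrite Rabs_pos_eq; lra.
  - exists (M1 + M2), (N1 + N2)%nat. split; [lra|]. intros r y Hr Hy. simpl.
    pose proof (pow_R1_Rle (1 + y) N1 ltac:(lra)).
    pose proof (pow_R1_Rle (1 + y) N2 ltac:(lra)).
    pose proof (H1 r y Hr Hy). pose proof (H2 r y Hr Hy).
    assert (M1 * (1 + y) ^ N1 <= M1 * ((1 + y) ^ N1 * (1 + y) ^ N2))
      by (apply Rmult_le_compat_l; nra).
    assert (M2 * (1 + y) ^ N2 <= M2 * ((1 + y) ^ N1 * (1 + y) ^ N2))
      by (apply Rmult_le_compat_l; nra).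
    rewrite pow_add. eapply Rle_trans; [apply Rabs_triang|]. lra.
  - exists (M1 * M2), (N1 + N2)%nat. split; [nra|]. intros r y Hr Hy. simpl.
    rewrite Rabs_mult, pow_add.
    replace (M1 * M2 * ((1 + y) ^ N1 * (1 + y) ^ N2))
      with ((M1 * (1 + y) ^ N1) * (M2 * (1 + y) ^ N2)) by ring.
    apply Rmult_le_compat; auto using Rabs_pos.
Qed.

Lemma exp_pow_INR (a : R) (n : nat) : exp a ^ n = exp (INR n * a).
Proof.
  induction n as [|n IH]; simpl.
  - rewrite Rmult_0_l, exp_0; reflexivity.
  - rewrite IH, <- exp_plus. f_equal. destruct n; simpl; ring.
Qed.

Lemma pow_mul_exp_neg_bounded (N : nat) :
  exists K, 0 < K /\ forall y, 0 <= y -> (1 + y) ^ N * exp (- y) <= K.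
Proof.
  set (m := INR N + 1).
  assert (Hm : 0 < m) by (unfold m; pose proof (pos_INR N); lra).
  exists (m ^ N * exp 1). split; [apply Rmult_lt_0_compat; [apply pow_lt; auto | apply exp_pos]|].
  intros y Hy.
  (* [1 + y <= m exp((1 + y) / m)], raised to the power [N]. *)
  assert (H1 : (1 + y) / m <= exp ((1 + y) / m)).
  { pose proof (exp_ineq1_le ((1 + y) / m)). lra. }
  assert (H2 : (1 + y) ^ N <= m ^ N * exp (INR N * ((1 + y) / m))).
  { rewrite <- exp_pow_INR, <- Rpow_mult_distr.
    apply pow_incr. split; [lra|].
    apply (Rmult_le_reg_r (/ m)); [apply Rinv_0_lt_compat; lra|].
    replace (m * exp ((1 + y) / m) * / m) with (exp ((1 + y) / m)) by (field; lra).
    exact H1. }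
  assert (H3 : INR N * ((1 + y) / m) <= 1 + y).
  { unfold Rdiv. rewrite <- Rmult_assoc, (Rmult_comm (INR N)).
    apply (Rmult_le_reg_r m); auto.
    replace ((1 + y) * INR N * / m * m) with ((1 + y) * INR N) by (field; lra).
    unfold m. pose proof (pos_INR N). nra. }
  apply Rle_trans with (m ^ N * exp (INR N * ((1 + y) / m)) * exp (- y)).
  { apply Rmult_le_compat_r; [apply Rlt_le, exp_pos | exact H2]. }
  rewrite Rmult_assoc, <- exp_plus.
  apply Rmult_le_compat_l; [apply pow_le; lra|].
  destruct (Rle_lt_or_eq_dec _ _ H3) as [H4|H4].
  - apply Rlt_le, exp_increasing. lra.
  - rewrite H4. replace (1 + y + - y) with 1 by ring. lra.
Qed.

Lemma pow_mul_exp_neg_decay (N : nat) :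
  exists K, 0 < K /\ forall y, 0 < y -> (1 + y) ^ N * exp (- y) <= K / y ^ 2.
Proof.
  destruct (pow_mul_exp_neg_bounded (N + 2)) as [K [HK HE]].
  exists K. split; [exact HK|]. intros y Hy.
  specialize (HE y ltac:(lra)). rewrite pow_add in HE.
  assert (Hy2 : y ^ 2 <= (1 + y) ^ 2) by (apply pow_incr; lra).
  pose proof (pow_lt (1 + y) N ltac:(lra)). pose proof (exp_pos (- y)).
  apply (Rmult_le_reg_r (y ^ 2)); [apply pow_lt; lra|].
  replace (K / y ^ 2 * y ^ 2) with K by (field; lra).
  eapply Rle_trans; [|exact HE].
  replace ((1 + y) ^ N * (1 + y) ^ 2 * exp (- y))
    with ((1 + y) ^ N * exp (- y) * (1 + y) ^ 2) by ring.
  apply Rmult_le_compat_l; [nra | exact Hy2].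
Qed.

Definition bump_quad (r : R) : R := (r - 2) * (3 - r).

Definition bump_poly (p : poly2) (r : R) : R :=
  if Rlt_dec 0 (bump_quad r) then peval p r (/ bump_quad r) * exp (- / bump_quad r) else 0.

(* With [y = 1 / bump_quad r] one has [y' = (2 r - 5) y^2], so the derivative of
   [P(r, y) exp (- y)] is [(P_r + (P - P_y) (5 - 2 r) y^2) exp (- y)]. *)
Definition bump_deriv_poly (p : poly2) : poly2 :=
  PAdd (pderiv_r p)
    (PMul (PAdd p (PMul (PConst (-1)) (pderiv_y p)))
          (PMul (PAdd (PConst 5) (PMul (PConst (-2)) PVarR)) (PMul PVarY PVarY))).

Lemma bump_quad_continuous x : continuous bump_quad x.
Proof.
  apply (@ex_derive_continuous R_AbsRing R_NormedModule).
  unfold bump_quad. auto_derive. exact I.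
Qed.

Lemma continuous_locally_gt (f : R -> R) x k :
  continuous f x -> k < f x -> locally x (fun z => k < f z).
Proof. intros Hf H. apply (Hf (fun u => k < u)). exact (open_gt k _ H). Qed.

Lemma continuous_locally_lt (f : R -> R) x k :
  continuous f x -> f x < k -> locally x (fun z => f z < k).
Proof. intros Hf H. apply (Hf (fun u => u < k)). exact (open_lt k _ H). Qed.

Lemma bump_poly_derive_pos p x : 0 < bump_quad x ->
  is_derive (bump_poly p) x (bump_poly (bump_deriv_poly p) x).
Proof.
  intros Hq.
  apply (is_derive_ext_loc (fun z => peval p z (/ bump_quad z) * exp (- / bump_quad z))).
  { generalize (continuous_locally_gt _ _ _ (bump_quad_continuous x) Hq).
    apply filter_imp. intros z Hz.
    unfold bump_poly. destruct (Rlt_dec 0 (bump_quad z)); [reflexivity | contradiction]. }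
  unfold bump_quad in *.
  assert (Hg : is_derive (fun z => / ((z - 2) * (3 - z))) x
                 (- (5 - 2 * x) / ((x - 2) * (3 - x)) ^ 2)).
  { auto_derive; [nra|]. field. nra. }
  assert (He : is_derive (fun z => exp (- / ((z - 2) * (3 - z)))) x
                 (exp (- / ((x - 2) * (3 - x))) * ((5 - 2 * x) / ((x - 2) * (3 - x)) ^ 2))).
  { auto_derive; [nra|].
    replace (exp (- / ((x + - (2)) * (3 + - x)))) with (exp (- / ((x - 2) * (3 - x))))
      by (f_equal; f_equal; f_equal; ring).
    field. nra. }
  assert (Hc : forall n m : R_AbsRing, mult n m = mult m n)
    by (intros; unfold mult; simpl; ring).
  eapply is_derive_value;
    [exact (is_derive_mult (K := R_AbsRing) _ _ _ _ _ (is_derive_peval p _ _ _ Hg) He Hc)|].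
  unfold bump_poly, bump_quad. destruct (Rlt_dec 0 ((x - 2) * (3 - x))); [|contradiction].
  unfold plus, mult; simpl. field. nra.
Qed.

Lemma bump_poly_derive_neg p x : bump_quad x < 0 ->
  is_derive (bump_poly p) x (bump_poly (bump_deriv_poly p) x).
Proof.
  intros Hq.
  replace (bump_poly (bump_deriv_poly p) x) with 0
    by (unfold bump_poly; destruct (Rlt_dec 0 (bump_quad x)); [lra | reflexivity]).
  apply (is_derive_ext_loc (fun _ => 0)).
  { generalize (continuous_locally_lt _ _ _ (bump_quad_continuous x) Hq).
    apply filter_imp. intros z Hz.
    unfold bump_poly. destruct (Rlt_dec 0 (bump_quad z)); [lra | reflexivity]. }
  exact (is_derive_const (K := R_AbsRing) (V := R_NormedModule) 0 x).
Qed.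

Lemma bump_poly_bound p : exists K, 0 < K /\
  forall x z, bump_quad x = 0 -> Rabs (z - x) < 1 -> Rabs (bump_poly p z) <= K * (z - x) ^ 2.
Proof.
  destruct (peval_bound p) as [M [N [HM HB]]].
  destruct (pow_mul_exp_neg_decay N) as [K [HK HE]].
  exists (4 * M * K). split; [nra|].
  intros x z Hx Hz. unfold bump_poly.
  destruct (Rlt_dec 0 (bump_quad z)) as [Hq|Hq].
  2: { rewrite Rabs_R0. apply Rmult_le_pos; [nra | apply pow2_ge_0]. }
  apply Rabs_def2 in Hz.
  assert (Hx23 : x = 2 \/ x = 3) by (unfold bump_quad in Hx; apply Rmult_integral in Hx; lra).
  assert (Hq2 : bump_quad z ^ 2 <= 4 * (z - x) ^ 2).
  { replace (bump_quad z) with ((z - x) * (5 - z - x))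
      by (rewrite <- (Rminus_0_r (bump_quad z)), <- Hx; unfold bump_quad; ring).
    rewrite Rpow_mult_distr. pose proof (pow2_ge_0 (z - x)).
    assert ((5 - z - x) ^ 2 <= 4) by (destruct Hx23; subst; nra). nra. }
  set (y := / bump_quad z).
  assert (Hy : 0 < y) by (apply Rinv_0_lt_compat; exact Hq).
  assert (Hdecay : K / y ^ 2 = K * bump_quad z ^ 2) by (unfold y; field; lra).
  pose proof (HB z y ltac:(lra) ltac:(lra)). pose proof (HE y Hy).
  rewrite Rabs_mult, (Rabs_pos_eq (exp _)) by (apply Rlt_le, exp_pos).
  apply Rle_trans with (M * (1 + y) ^ N * exp (- y)).
  { apply Rmult_le_compat_r; [apply Rlt_le, exp_pos | assumption]. }
  rewrite Rmult_assoc.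
  apply Rle_trans with (M * (K * bump_quad z ^ 2)).
  { apply Rmult_le_compat_l; lra. }
  replace (4 * M * K * (z - x) ^ 2) with (M * (K * (4 * (z - x) ^ 2))) by ring.
  apply Rmult_le_compat_l; [lra|]. apply Rmult_le_compat_l; lra.
Qed.

(* A function that is [O((z - x)^2)] near [x] has derivative [0] at [x]. *)
Lemma bump_poly_derive_zero p x : bump_quad x = 0 ->
  is_derive (bump_poly p) x (bump_poly (bump_deriv_poly p) x).
Proof.
  intros Hq.
  assert (H0 : forall p', bump_poly p' x = 0)
    by (intros p'; unfold bump_poly; destruct (Rlt_dec 0 (bump_quad x)); [lra | reflexivity]).
  rewrite H0. apply is_derive_Reals.
  destruct (bump_poly_bound p) as [K [HK HB]].
  intros eps Heps.
  assert (Hd : 0 < Rmin 1 (eps / K)) by (apply Rmin_pos; [lra | apply Rdiv_lt_0_compat; lra]).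
  exists (mkposreal _ Hd). intros h Hh Hhd. simpl in Hhd.
  pose proof (Rmin_l 1 (eps / K)). pose proof (Rmin_r 1 (eps / K)).
  rewrite H0. replace ((bump_poly p (x + h) - 0) / h - 0) with (bump_poly p (x + h) / h)
    by (field; auto).
  specialize (HB x (x + h) Hq). replace (x + h - x) with h in HB by ring.
  specialize (HB ltac:(lra)).
  assert (Ha : 0 < Rabs h) by (apply Rabs_pos_lt; auto).
  unfold Rdiv. rewrite Rabs_mult, Rabs_inv.
  apply (Rmult_lt_reg_r (Rabs h)); [exact Ha|].
  rewrite Rmult_assoc, Rinv_l, Rmult_1_r by lra.
  assert (K * Rabs h < eps).
  { apply (Rmult_lt_reg_r (/ K)); [apply Rinv_0_lt_compat; lra|].
    replace (K * Rabs h * / K) with (Rabs h) by (field; lra). unfold Rdiv in *. lra. }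
  replace (h ^ 2) with (Rabs h * Rabs h) in HB
    by (rewrite <- Rabs_mult, Rabs_pos_eq; nra).
  nra.
Qed.

Lemma bump_poly_derive p x : is_derive (bump_poly p) x (bump_poly (bump_deriv_poly p) x).
Proof.
  destruct (Rtotal_order (bump_quad x) 0) as [H|[H|H]].
  - apply bump_poly_derive_neg, H.
  - apply bump_poly_derive_zero, H.
  - apply bump_poly_derive_pos, H.
Qed.

Lemma smooth_bump_poly p : smooth (bump_poly p).
Proof.
  assert (HD : forall p', Derive (bump_poly p') = bump_poly (bump_deriv_poly p')).
  { intros p'. apply functional_extensionality; intros x.
    apply is_derive_unique, bump_poly_derive. }
  assert (Hn : forall n, Derive_n (bump_poly p) n = bump_poly (Nat.iter n bump_deriv_poly p)).
  { induction n as [|n IH]; simpl; [reflexivity|]. rewrite IH. apply HD. }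
  intros [|k] x; simpl; [exact I|].
  rewrite Hn. eexists. apply bump_poly_derive.
Qed.

Definition bump : R -> R := bump_poly (PConst 1).

Lemma bump_supported : supported_in bump 1 4.
Proof.
  exists 2, 3. do 3 (split; [lra|]). intros r Hr.
  unfold bump, bump_poly. destruct (Rlt_dec 0 (bump_quad r)) as [Hq|Hq]; [|reflexivity].
  unfold bump_quad in Hq. destruct Hr; nra.
Qed.

Lemma bump_nonneg r : 0 <= bump r.
Proof.
  unfold bump, bump_poly. destruct (Rlt_dec 0 (bump_quad r)); [|lra].
  simpl. rewrite Rmult_1_l. apply Rlt_le, exp_pos.
Qed.

Lemma bump_pos r : 2 < r < 3 -> 0 < bump r.
Proof.
  intros Hr. unfold bump, bump_poly. destruct (Rlt_dec 0 (bump_quad r)) as [Hq|Hq].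
  - simpl. rewrite Rmult_1_l. apply exp_pos.
  - exfalso. apply Hq. unfold bump_quad. nra.
Qed.

Lemma RInt_bump_pos : 0 < RInt (fun r => bump r / r ^ 2) 1 4.
Proof.
  set (f := fun r => bump r / r ^ 2).
  assert (Hd : forall z, 1 <= z -> ex_derive f z).
  { intros z Hz. assert (z <> 0) by lra.
    assert (ex_derive bump z) by (eexists; apply bump_poly_derive).
    unfold f. auto_derive. repeat split; auto; solve_neq0. }
  assert (Hc : forall a b, 1 <= a <= b -> ex_RInt f a b)
    by (intros a b Hab; apply ex_RInt_derivable; [lra|]; intros; apply Hd; lra).
  assert (Hf : forall r, 1 <= r -> 0 <= f r).
  { intros r Hr. apply Rdiv_le_0_compat; [apply bump_nonneg | apply pow_lt; lra]. }
  rewrite <- (RInt_Chasles f 1 2 4), <- (RInt_Chasles f 2 3 4) by (apply Hc; lra).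
  unfold plus; simpl.
  assert (0 <= RInt f 1 2) by (apply RInt_ge_0; [lra | apply Hc; lra | intros; apply Hf; lra]).
  assert (0 <= RInt f 3 4) by (apply RInt_ge_0; [lra | apply Hc; lra | intros; apply Hf; lra]).
  assert (0 < RInt f 2 3).
  { apply RInt_gt_0; [lra | |].
    - intros x Hx. apply Rdiv_lt_0_compat; [apply bump_pos; lra | apply pow_lt; lra].
    - intros x Hx. apply (@ex_derive_continuous R_AbsRing R_NormedModule), Hd. lra. }
  lra.
Qed.

Theorem theorem2 (A B C : R) :
  H_finite_at_4 A B C -> B = -4 * C /\ A = C.
Proof.
  intros HF.
  assert (Hrel : forall c, exp c <> 1 ->
            (2 * A + B + 2 * C) * (1 - exp c) + 2 * (B + 4 * C) = 0)
    by (intros c Hc; exact (H_finite_at_4_relation A B C c bump 1 4 HF Hc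
          (smooth_bump_poly _) ltac:(lra) ltac:(lra) bump_supported RInt_bump_pos)).
  pose proof (Hrel (ln 2)) as H2. pose proof (Hrel (ln 3)) as H3.
  rewrite exp_ln in H2, H3 by lra.
  specialize (H2 ltac:(lra)). specialize (H3 ltac:(lra)).
  split; lra.
Qed.
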